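(* Let $p>5$ be a prime, $q=p^h$, and let $\mathcal{F}$ be the projective closure of $ax^ny^m+bx^n+cy^m=1$ over $\mathbb{F}_q$, where $a,b,c\in\mathbb{F}_q^*$, $c\ne-\frac ab$, and $m,n$ are positive integers with $p\nmid mn$, $n\ge m$, $\min\{m,n\}>2$. If $p\mid(n+1)$ and $p\mid(m-1)$, then $\mathcal{F}$ is $\mathbb{F}_q$-Frobenius classical with respect to conics.
   Context: With $\varphi_0,\dots,\varphi_5$ the monomials of degree 2 in $x,y,1$, $\tau$ separating and $D^{(k)}_\tau$ Hasse derivatives, the $\mathbb{F}_q$-Frobenius order sequence w.r.t. conics is the lexicographically smallest $\nu_0<\dots<\nu_4$ such that the $6\times6$ determinant with first row $(\varphi_j^q)_j$ and rows $(D^{(\nu_i)}_\tau\varphi_j)_j$ is nonzero; the curve is $\mathbb{F}_q$-Frobenius classical w.r.t. conics if $\nu_i=i$ for all $i$. *)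

From HB Require Import structures.
From mathcomp Require Import all_boot all_order all_algebra.
Set Implicit Arguments. Unset Strict Implicit. Unset Printing Implicit Defensive.
Import Order.TTheory GRing.Theory Num.Theory.
Local Open Scope ring_scope.

Definition transcendental (F : fieldType) (K : fieldType)
  (iota : {rmorphism F -> K}) (x : K) : Prop :=
  forall P : {poly F}, P != 0 -> (map_poly iota P).[x] != 0.

Definition hasse_deriv (F : fieldType) (K : fieldType)
  (iota : {rmorphism F -> K}) (x : K) (D : nat -> K -> K) : Prop :=
  (forall u, D 0%N u = u) /\
  (forall k u v, D k (u + v) = D k u + D k v) /\
  (forall k u v, D k (u * v) = \sum_(i < k.+1) D i u * D (k - i)%N v) /\
  (forall k c, (0 < k)%N -> D k (iota c) = 0) /\
  (forall i j u, D i (D j u) = 'C(i + j, i)%:R * D (i + j)%N u) /\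
  D 1%N x = 1 /\
  (forall k, (1 < k)%N -> D k x = 0).

Definition conic_monomials (K : fieldType) (x y : K) (j : 'I_6) : K :=
  nth 0 [:: 1; x; y; x ^+ 2; x * y; y ^+ 2] j.

(* The 6x6 matrix: first row (phi_j^q)_j, row i+1 = (D^(nu_i) phi_j)_j. *)
Definition frob_matrix (K : fieldType) (q : nat) (D : nat -> K -> K)
  (x y : K) (nu : 'I_5 -> nat) : 'M[K]_6 :=
  \matrix_(i < 6, j < 6)
    match unlift ord0 i with
    | None => conic_monomials x y j ^+ q
    | Some i' => D (nu i') (conic_monomials x y j)
    end.

Definition strictly_increasing (nu : 'I_5 -> nat) : Prop :=
  forall i j : 'I_5, (i < j)%N -> (nu i < nu j)%N.

Definition lex_le (nu mu : 'I_5 -> nat) : Prop :=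
  (forall i, nu i = mu i) \/
  exists i : 'I_5, (forall j : 'I_5, (j < i)%N -> nu j = mu j) /\ (nu i < mu i)%N.

Definition frob_order_seq_conics (K : fieldType) (q : nat) (D : nat -> K -> K)
  (x y : K) (nu : 'I_5 -> nat) : Prop :=
  [/\ strictly_increasing nu,
      \det (frob_matrix q D x y nu) != 0 &
      forall mu, strictly_increasing mu -> \det (frob_matrix q D x y mu) != 0 ->
        lex_le nu mu ].

Definition frob_classical_conics (K : fieldType) (q : nat) (D : nat -> K -> K)
  (x y : K) : Prop :=
  exists nu, frob_order_seq_conics q D x y nu /\ forall i : 'I_5, nu i = i :> nat.

From HB Require Import structures.
From mathcomp Require Import all_boot all_order all_algebra ring zify.
From mathcomp Require Import finfield.
Import Order.TTheory GRing.Theory Num.Theory.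
Local Open Scope ring_scope.

(* Since p divides n + 1 and m - 1, the first Hasse derivative D1 kills x^(n+1) and
   y^(m-1).  Writing the curve equation as y E = x - b x^(n+1) with
   E = y^(m-1) (c x + a x^(n+1)), one gets D1 E = g := c y^(m-1), D1 g = 0 and
   D1 y E + y g = 1; differentiating further, D(k+1) y = r^k D1 y with r = -g/E as
   long as k! is invertible.  So up to order 4 the curve agrees with the conic
   (Y - y) (1 - r (X - x)) = D1 y (X - x), and the Frobenius matrix with orders
   0, ..., 4 is singular only if (x^q, y^q) lies on this osculating conic.  Together
   with the curve equation this would make the transcendental x a root of
   (1 - bX^n)^(q+m-1) (cX^q + aX^(n+1))^m - (X^q - bX^(n+1))^m (aX^n + c)^(q+m-1),
   which is nonzero: 1 - bX^n is coprime to aX^n + c (as a + bc != 0), so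
   (1 - bX^n)^(q+m-1) would divide (X^q - bX^(n+1))^m, against degrees. *)

Lemma eq_lincomb1 {R : pzRingType} (k : R) {a1 b1 c d : R} :
  a1 = b1 -> c - d = k * (a1 - b1) -> c = d.
Proof. by move=> ->; rewrite subrr mulr0 => /subr0_eq. Qed.

Lemma eq_lincomb2 {R : pzRingType} (k1 k2 : R) {a1 b1 a2 b2 c d : R} :
  a1 = b1 -> a2 = b2 -> c - d = k1 * (a1 - b1) + k2 * (a2 - b2) -> c = d.
Proof. by move=> -> ->; rewrite !subrr !mulr0 addr0 => /subr0_eq. Qed.

Lemma eq_lincomb3 {R : pzRingType} (k1 k2 k3 : R) {a1 b1 a2 b2 a3 b3 c d : R} :
  a1 = b1 -> a2 = b2 -> a3 = b3 ->
  c - d = k1 * (a1 - b1) + k2 * (a2 - b2) + k3 * (a3 - b3) -> c = d.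
Proof. by move=> -> -> ->; rewrite !subrr !mulr0 !addr0 => /subr0_eq. Qed.

Lemma prime_ndvd_fact p k : prime p -> (k < p)%N -> ~~ (p %| k`!)%N.
Proof.
move=> p_pr; elim: k => [|k IHk] lt_kp; first by rewrite dvdn1 neq_ltn prime_gt1 ?orbT.
rewrite factS Euclid_dvdM // negb_or IHk ?gtnNdvd //; exact: ltnW.
Qed.

Lemma frobenius_degree_gap {m n q : nat} : (1 < m <= n)%N -> (2 < q)%N ->
  (maxn q n.+1 * m < n * (q + m.-1))%N.
Proof. by case/andP=> m_gt1 le_mn q_gt2; case: (leqP q n.+1); nia. Qed.

Lemma natr_fact_neq0 (R : idomainType) k l :
  (k <= l)%N -> l`!%:R != 0 :> R -> k`!%:R != 0 :> R.
Proof. by move=> le_kl; rewrite (fact_split le_kl) natrM mulf_eq0 negb_or => /andP[]. Qed.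

Lemma strictly_increasing_geq nu : strictly_increasing nu -> forall i : 'I_5, (i <= nu i)%N.
Proof.
move=> nu_incr [i lt_i5]; elim: i lt_i5 => // i IHi lt_i5.
by apply: leq_ltn_trans (IHi (ltnW lt_i5)) _; apply: nu_incr.
Qed.

Lemma lex_le_id nu : strictly_increasing nu -> lex_le (fun i : 'I_5 => i : nat) nu.
Proof.
move=> nu_incr.
have [/forallP nu_id | /forallPn[i0 nu_i0]] := boolP [forall i : 'I_5, nu i == i].
  by left=> i; rewrite (eqP (nu_id i)).
right; have [j nu_j j_min] := @arg_minnP _ i0 (fun i => nu i != i) (fun i => i) nu_i0.
exists j; split; last by rewrite ltn_neqAle eq_sym nu_j strictly_increasing_geq.
by move=> k lt_kj; apply/eqP; apply: contraTT lt_kj => nu_k; rewrite -leqNgt j_min // eq_sym.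
Qed.

Lemma frob_classical_conics_det (K : fieldType) q (D : nat -> K -> K) x y :
  \det (frob_matrix q D x y (fun i : 'I_5 => i : nat)) != 0 -> frob_classical_conics q D x y.
Proof.
move=> det_neq0; exists (fun i : 'I_5 => i : nat); split=> //.
by split=> // mu mu_incr _; apply: lex_le_id.
Qed.

Section CurvePolynomials.
Context {F : fieldType}.

Lemma coprimep_1subXn_Xnadd (a b c : F) n : a + b * c != 0 ->
  coprimep (1 - b%:P * 'X^n) (a%:P * 'X^n + c%:P).
Proof.
move=> abc_neq0; apply/Bezout_eq1_coprimepP.
pose k := (a + b * c)^-1; exists ((k * a)%:P, (k * b)%:P) => /=.
have -> : (k * a)%:P * (1 - b%:P * 'X^n) + (k * b)%:P * (a%:P * 'X^n + c%:P) =
          (k * (a + b * c))%:P by rewrite !rmorphM rmorphD /= rmorphM; ring.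
by rewrite mulVf.
Qed.

Lemma size_1subCXn (b : F) n : b != 0 -> (0 < n)%N -> size (1 - b%:P * 'X^n) = n.+1.
Proof.
by move=> b_neq0 n_gt0; rewrite addrC size_polyDl size_polyN size_Cmul // size_polyXn // size_poly1.
Qed.

Lemma curve_frobenius_poly_neq {a b c : F} {m n q : nat} :
  b != 0 -> a + b * c != 0 -> (1 < m <= n)%N -> (2 < q)%N ->
  (1 - b%:P * 'X^n) ^+ (q + m.-1) * (c%:P * 'X^q + a%:P * 'X^(n.+1)) ^+ m !=
  ('X^q - b%:P * 'X^(n.+1)) ^+ m * (a%:P * 'X^n + c%:P) ^+ (q + m.-1).
Proof.
move=> b_neq0 abc_neq0 mn q_gt2; have /andP[m_gt1 le_mn] := mn.
set N := 1 - _; set S := _ - _ * 'X^(n.+1); set T := _ + _ * 'X^(n.+1); set k := (q + m.-1)%N.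
apply/eqP => eq_NS.
have sizeN : size N = n.+1 by rewrite size_1subCXn //; lia.
have N_neq0 : N != 0 by rewrite -size_poly_eq0 sizeN.
have S_neq0 : S != 0.
  apply: contra_eq_neq eq_NS => S_eq0; rewrite S_eq0 expr0n gtn_eqF ?(ltnW m_gt1) // mul0r.
  rewrite mulf_neq0 ?expf_neq0 //.
  have -> : T = c%:P * S + (a + b * c)%:P * 'X^(n.+1) by rewrite /S /T rmorphD rmorphM /=; ring.
  by rewrite S_eq0 mulr0 add0r mulf_neq0 ?polyC_eq0 ?expf_neq0 ?polyX_eq0.
have : N ^+ k %| S ^+ m.
  rewrite -(@Gauss_dvdpl _ _ ((a%:P * 'X^n + c%:P) ^+ k)) -?eq_NS ?dvdp_mulIl //.
  by apply: coprimep_expl; apply: coprimep_expr; apply: coprimep_1subXn_Xnadd.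
move=> /(dvdp_leq (expf_neq0 _ S_neq0)) /(leq_sub2r 1); rewrite !subn1 !size_exp sizeN /=.
have sizeS : ((size S).-1 <= maxn q n.+1)%N.
  rewrite -ltnS -maxnSS prednK ?size_poly_gt0 //.
  by apply: leq_trans (size_polyD _ _) _; rewrite size_polyN size_Cmul // !size_polyXn.
move=> le_deg; have := frobenius_degree_gap mn q_gt2.
by rewrite ltnNge (leq_trans le_deg) // leq_mul2r sizeS orbT.
Qed.

End CurvePolynomials.

(* The columns 1, x, y, x^2, xy, y^2 of v *m M = 0, with w_i = v 0 i and M the
   Frobenius matrix with orders 0, ..., 4, when (X, Y) = (x^q, y^q) and
   D(k+1) y = r^k s. *)
Lemma conic_wronskian_system (K : fieldType) (x y X Y s r w0 w1 w2 w3 w4 w5 : K) :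
  r != 0 -> s != 0 -> (Y - y) * (1 - r * (X - x)) - s * (X - x) != 0 ->
  w0 + w1 = 0 ->
  w0 * X + w1 * x + w2 = 0 ->
  w0 * Y + w1 * y + (w2 + w3 * r + w4 * r ^+ 2 + w5 * r ^+ 3) * s = 0 ->
  w0 * X ^+ 2 + w1 * x ^+ 2 + 2 * w2 * x + w3 = 0 ->
  w0 * X * Y + w1 * x * y + (w2 + w3 * r + w4 * r ^+ 2 + w5 * r ^+ 3) * x * s
    + w2 * y + (w3 + w4 * r + w5 * r ^+ 2) * s = 0 ->
  w0 * Y ^+ 2 + w1 * y ^+ 2 + 2 * (w2 + w3 * r + w4 * r ^+ 2 + w5 * r ^+ 3) * y * s
    + (w3 + 2 * w4 * r + 3 * w5 * r ^+ 2) * s ^+ 2 = 0 ->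
  [/\ w0 = 0, w1 = 0, w2 = 0, w3 = 0 & w4 = 0 /\ w5 = 0].
Proof.
move=> r_neq0 s_neq0 off_conic e0 e1 e2 e3 e4 e5.
have w1E : w1 = - w0 by apply: (eq_lincomb1 1 e0); ring.
rewrite w1E in e1 e2 e3 e4 e5.
have w2E : w2 = - w0 * (X - x) by apply: (eq_lincomb1 1 e1); ring.
rewrite w2E in e2 e3 e4 e5.
have w3E : w3 = - w0 * (X - x) ^+ 2 by apply: (eq_lincomb1 1 e3); ring.
rewrite w3E in e2 e4 e5.
have w0_eq0 : w0 = 0.
  have : w0 * ((Y - y) * (1 - r * (X - x)) - s * (X - x)) = 0.
    by apply: (eq_lincomb2 (1 + r * x) (- r) e2 e4); ring.
  by move/eqP; rewrite mulf_eq0 (negPf off_conic) orbF => /eqP.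
rewrite w0_eq0 in w1E w2E w3E e2 e4 e5.
have w4E : w4 = - r * w5.
  have : r * s * (w4 + r * w5) = 0.
    by apply: (eq_lincomb2 1 (- x) e4 e2); ring.
  move/eqP; rewrite !mulf_eq0 (negPf r_neq0) (negPf s_neq0) addr_eq0 => /eqP ->.
  by rewrite mulNr.
rewrite w4E in e2 e5.
have w5_eq0 : w5 = 0.
  have : (r * s) ^+ 2 * w5 = 0.
    by apply: (eq_lincomb2 1 (- (2 * y)) e5 e2); ring.
  by move/eqP; rewrite mulf_eq0 expf_eq0 !mulf_eq0 (negPf r_neq0) (negPf s_neq0) => /eqP.
by rewrite w1E w2E w3E w4E w5_eq0 !(mulr0, mul0r, oppr0).
Qed.

Lemma frob_matrix_kernel (K : fieldType) q (D : nat -> K -> K) x y nu (v : 'rV[K]_6) :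
  v *m frob_matrix q D x y nu = 0 ->
  forall j, v 0 0 * conic_monomials x y j ^+ q
            + \sum_(i < 5) v 0 (lift 0 i) * D (nu i) (conic_monomials x y j) = 0.
Proof.
move=> /rowP kerv j; move: (kerv j); rewrite !mxE big_ord_recl !mxE unlift_none.
by under eq_bigr => i _ do rewrite mxE liftK.
Qed.

Section HasseDerivation.
Context {F K : fieldType} {iota : {rmorphism F -> K}} {x : K} {D : nat -> K -> K}.
Hypothesis HD : hasse_deriv iota x D.

Lemma hasse_deriv0 u : D 0 u = u.
Proof. by case: HD. Qed.

Lemma hasse_derivD k : {morph D k : u v / u + v}.
Proof. by move=> u v; case: HD => _ []. Qed.

Lemma hasse_derivM k u v : D k (u * v) = \sum_(i < k.+1) D i u * D (k - i) v.
Proof. by case: HD => _ [_ []]. Qed.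

Lemma hasse_derivC k c : (0 < k)%N -> D k (iota c) = 0.
Proof. by case: HD => _ [_ [_ [hC _]]]; apply: hC. Qed.

Lemma hasse_deriv_comp i j u : D i (D j u) = 'C(i + j, i)%:R * D (i + j) u.
Proof. by case: HD => _ [_ [_ [_ []]]]. Qed.

Lemma hasse_deriv1x : D 1 x = 1.
Proof. by case: HD => _ [_ [_ [_ [_ []]]]]. Qed.

Lemma hasse_deriv_x k : (1 < k)%N -> D k x = 0.
Proof. by case: HD => _ [_ [_ [_ [_ [_ hx]]]]]; apply: hx. Qed.

Lemma hasse_deriv_nat k l : (0 < k)%N -> D k l%:R = 0.
Proof. by move=> k_gt0; rewrite -(rmorph_nat iota) hasse_derivC. Qed.

Lemma hasse_deriv1 k : (0 < k)%N -> D k 1 = 0.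
Proof. exact: (hasse_deriv_nat k 1). Qed.

Lemma hasse_deriv_zero k : D k 0 = 0.
Proof. by apply: (addrI (D k 0)); rewrite -hasse_derivD !addr0. Qed.

Lemma hasse_derivN k u : D k (- u) = - D k u.
Proof. by apply/eqP; rewrite -subr_eq0 opprK -hasse_derivD addNr hasse_deriv_zero. Qed.

Lemma hasse_derivB k u v : D k (u - v) = D k u - D k v.
Proof. by rewrite hasse_derivD hasse_derivN. Qed.

Lemma hasse_deriv1M u v : D 1 (u * v) = u * D 1 v + D 1 u * v.
Proof. by rewrite hasse_derivM big_ord_recr big_ord1 /= !hasse_deriv0 addrC. Qed.

Lemma hasse_deriv1X u j : D 1 (u ^+ j) = j%:R * u ^+ j.-1 * D 1 u.
Proof.
elim: j => [|j IHj]; first by rewrite hasse_deriv1 // !mul0r.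
rewrite exprS hasse_deriv1M IHj; case: j {IHj} => [|j] /=; first by rewrite !expr0; ring.
by rewrite exprS; ring.
Qed.

Lemma hasse_deriv1_comp k u : D 1 (D k u) = k.+1%:R * D k.+1 u.
Proof. by rewrite hasse_deriv_comp add1n bin1. Qed.

Lemma hasse_derivxM k u : D k.+1 (x * u) = x * D k.+1 u + D k u.
Proof.
rewrite hasse_derivM !big_ord_recl /= hasse_deriv0 hasse_deriv1x mul1r subn1 /=.
by rewrite big1 ?addr0 // => i _; rewrite hasse_deriv_x ?mul0r.
Qed.

Section GeometricRecurrence.
Context {y E g : K}.
Hypotheses (D1E : D 1 E = g) (D1g : D 1 g = 0) (D1y : D 1 y * E + y * g = 1).

Lemma hasse_deriv_recurrence k :
  k.+1`!%:R != 0 :> K -> D k.+1 y * E + D k y * g = (k == 0%N)%:R.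
Proof.
elim: k => [|k IHk] fact_neq0; first by rewrite hasse_deriv0.
have := fact_neq0; rewrite factS natrM mulf_eq0 negb_or => /andP[k2_neq0 /IHk].
move=> /(congr1 (D 1)); rewrite hasse_derivD !hasse_deriv1M D1E D1g !hasse_deriv1_comp.
rewrite hasse_deriv_nat // => rec; apply: (mulfI k2_neq0); rewrite mulr0 -rec.
by rewrite -!natr1; ring.
Qed.

Lemma hasse_deriv_geometric : E != 0 ->
  forall k, k.+1`!%:R != 0 :> K -> D k.+1 y = (- g / E) ^+ k * D 1 y.
Proof.
move=> E_neq0; elim => [|k IHk] fact_neq0; first by rewrite mul1r.
have rec : D k.+2 y * E + D k.+1 y * g = 0 := hasse_deriv_recurrence k.+1 fact_neq0.
have := fact_neq0; rewrite factS natrM mulf_eq0 negb_or => /andP[_ /IHk IH].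
apply: (mulIf E_neq0); rewrite exprS -mulrA -IH mulrAC divfK //.
by apply: (eq_lincomb1 1 rec); ring.
Qed.

End GeometricRecurrence.

Lemma det_frob_matrix_conics_neq0 {q : nat} {y s r : K} :
  (forall k, (k < 4)%N -> D k.+1 y = r ^+ k * s) -> r != 0 -> s != 0 ->
  (y ^+ q - y) * (1 - r * (x ^+ q - x)) - s * (x ^+ q - x) != 0 ->
  \det (frob_matrix q D x y (fun i : 'I_5 => i : nat)) != 0.
Proof.
move=> Dy r_neq0 s_neq0 off_conic; apply/det0P => -[v v_neq0 /frob_matrix_kernel kerv].
have e0 := kerv (@Ordinal 6 0 isT); have e1 := kerv (@Ordinal 6 1 isT).
have e2 := kerv (@Ordinal 6 2 isT); have e3 := kerv (@Ordinal 6 3 isT).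
have e4 := kerv (@Ordinal 6 4 isT); have e5 := kerv (@Ordinal 6 5 isT).
rewrite /conic_monomials /= !big_ord_recl !big_ord0 /bump /= !addr0 in e0 e1 e2 e3 e4 e5.
rewrite !expr2 ?hasse_derivxM !hasse_deriv0 in e0 e1 e2 e3 e4 e5.
rewrite !(hasse_derivM _ y y) !big_ord_recl !big_ord0 /= !addr0 in e5.
rewrite ?hasse_deriv0 ?hasse_deriv1x ?hasse_deriv_x ?hasse_deriv1 ?Dy // in e0 e1 e2 e3 e4 e5.
rewrite !(mulr0, addr0, mulr1, add0r, exprMn, expr1n) in e0 e1 e2 e3 e4 e5.
set w0 := v 0 0 in e0 e1 e2 e3 e4 e5.
set w1 := v 0 (lift 0 0) in e0 e1 e2 e3 e4 e5.
set w2 := v 0 (lift 0 (lift 0 0)) in e0 e1 e2 e3 e4 e5.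
set w3 := v 0 (lift 0 (lift 0 (lift 0 0))) in e0 e1 e2 e3 e4 e5.
set w4 := v 0 (lift 0 (lift 0 (lift 0 (lift 0 0)))) in e0 e1 e2 e3 e4 e5.
set w5 := v 0 (lift 0 (lift 0 (lift 0 (lift 0 (lift 0 0))))) in e0 e1 e2 e3 e4 e5.
set X := x ^+ q in e0 e1 e2 e3 e4 e5.
set Y := y ^+ q in e0 e1 e2 e3 e4 e5.
have [||||||w0_eq0 w1_eq0 w2_eq0 w3_eq0 [w4_eq0 w5_eq0]] :=
  @conic_wronskian_system K x y X Y s r w0 w1 w2 w3 w4 w5 r_neq0 s_neq0 off_conic.
- by apply: (eq_lincomb1 1 e0); ring.
- by apply: (eq_lincomb1 1 e1); ring.
- by apply: (eq_lincomb1 1 e2); ring.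
- by apply: (eq_lincomb1 1 e3); ring.
- by apply: (eq_lincomb1 1 e4); ring.
- by apply: (eq_lincomb1 1 e5); ring.
move/eqP: v_neq0; apply; apply/rowP => -[[|[|[|[|[|[|//]]]]]] lt_j6]; rewrite mxE;
  [ apply: etrans w0_eq0 | apply: etrans w1_eq0 | apply: etrans w2_eq0
  | apply: etrans w3_eq0 | apply: etrans w4_eq0 | apply: etrans w5_eq0 ];
  by congr (v 0 _); apply: val_inj.
Qed.

End HasseDerivation.

Section Curve.
Context {F K : fieldType} {iota : {rmorphism F -> K}} {a b c : F} {m n : nat} {x y : K}.
Hypothesis m_gt0 : (0 < m)%N.
Hypothesis on_curve : iota a * x ^+ n * y ^+ m + iota b * x ^+ n + iota c * y ^+ m = 1.

Local Notation B := (y ^+ m.-1).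
Local Notation g := (iota c * B).
Local Notation E := (B * (iota c * x + iota a * x ^+ n.+1)).

Lemma curve_eq_ym : y ^+ m * (iota a * x ^+ n + iota c) = 1 - iota b * x ^+ n.
Proof. by apply: (eq_lincomb1 1 on_curve); ring. Qed.

Lemma curve_yE : y * E = x - iota b * x ^+ n.+1.
Proof.
have y_mE : y ^+ m = y * B by rewrite -exprS prednK.
by apply: (eq_lincomb1 x curve_eq_ym); rewrite y_mE exprS; ring.
Qed.

Hypotheses (x_tr : transcendental iota x) (b_neq0 : b != 0) (n_gt0 : (0 < n)%N).

Lemma curve_x_neq0 : x != 0.
Proof. by have := x_tr _ (negbT (polyX_eq0 F)); rewrite map_polyX hornerX. Qed.

Lemma curve_1subXn_neq0 : 1 - iota b * x ^+ n != 0.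
Proof.
have P_neq0 : 1 - b%:P * 'X^n != 0 by rewrite -size_poly_eq0 size_1subCXn.
by have := x_tr _ P_neq0; rewrite rmorphB rmorph1 rmorphM /= map_polyC map_polyXn !hornerE.
Qed.

Lemma curve_y_neq0 : y != 0.
Proof.
move: curve_1subXn_neq0; rewrite -curve_eq_ym; apply: contra_neq => ->.
by rewrite expr0n gtn_eqF // mul0r.
Qed.

Lemma curve_E_neq0 : E != 0.
Proof.
have := curve_1subXn_neq0; rewrite -curve_eq_ym mulf_eq0 negb_or => /andP[_ a_c_neq0].
have -> : E = B * x * (iota a * x ^+ n + iota c) by rewrite exprS; ring.
by rewrite !mulf_neq0 ?expf_neq0 ?curve_x_neq0 ?curve_y_neq0.
Qed.

Lemma curve_ratio_neq0 : c != 0 -> - g / E != 0.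
Proof.
move=> c_neq0; rewrite mulf_neq0 ?invr_eq0 ?curve_E_neq0 // oppr_eq0.
by rewrite mulf_neq0 ?fmorph_eq0 ?expf_neq0 ?curve_y_neq0.
Qed.

Section Derivatives.
Context {D : nat -> K -> K}.
Hypothesis HD : hasse_deriv iota x D.
Hypotheses (char_n1 : n.+1%:R = 0 :> K) (char_m1 : m.-1%:R = 0 :> K).

Lemma curve_D1g : D 1 g = 0.
Proof.
by rewrite (hasse_deriv1M HD) (hasse_derivC HD) // (hasse_deriv1X HD) char_m1 !mul0r mulr0 add0r.
Qed.

Lemma curve_D1E : D 1 E = g.
Proof.
rewrite !(hasse_deriv1M HD, hasse_derivD HD) !(hasse_derivC HD) // !(hasse_deriv1X HD) //.
by rewrite char_m1 char_n1 (hasse_deriv1x HD); ring.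
Qed.

Lemma curve_D1y : D 1 y * E + y * g = 1.
Proof.
have := congr1 (D 1) curve_yE.
rewrite (hasse_deriv1M HD y) curve_D1E (hasse_derivB HD) (hasse_deriv1x HD).
rewrite (hasse_deriv1M HD) (hasse_derivC HD) // (hasse_deriv1X HD) char_n1 => eq1.
by apply: (eq_lincomb1 1 eq1); ring.
Qed.

Hypothesis abc_neq0 : a + b * c != 0.

Lemma curve_D1y_neq0 : D 1 y != 0.
Proof.
apply/negP => /eqP s_eq0; move: curve_D1y; rewrite s_eq0 mul0r add0r => y_g.
have c_ym : iota c * y ^+ m = 1 by rewrite -y_g -{1}(prednK m_gt0) exprS; ring.
have : x ^+ n * (iota a * y ^+ m + iota b) = 0.
  by apply: (eq_lincomb2 1 (-1) on_curve c_ym); ring.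
move/eqP; rewrite mulf_eq0 expf_eq0 (negPf curve_x_neq0) andbF /= => /eqP a_b.
have : iota (a + b * c) = 0.
  by rewrite rmorphD rmorphM /=; apply: (eq_lincomb2 (iota c) (- iota a) a_b c_ym); ring.
by move/eqP; rewrite fmorph_eq0 (negPf abc_neq0).
Qed.

Lemma curve_frobenius_off_conic {q : nat} : (1 < m <= n)%N -> (2 < q)%N ->
  (y ^+ q - y) * (1 - (- g / E) * (x ^+ q - x)) - D 1 y * (x ^+ q - x) != 0.
Proof.
move=> mn q_gt2; set r := - g / E; set u := x ^+ q - x.
have rE : r * E = - g by rewrite divfK // curve_E_neq0.
have EH : E * ((y ^+ q - y) * (1 - r * u) - D 1 y * u) =
          y ^+ q * B * (iota c * x ^+ q + iota a * x ^+ n.+1) - (x ^+ q - iota b * x ^+ n.+1).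
  by apply: (eq_lincomb3 (- (y ^+ q - y) * u) (-1) (- u) rE curve_yE curve_D1y); rewrite /u; ring.
apply/negP => /eqP H_eq0; move: EH; rewrite H_eq0 mulr0 => /esym /subr0_eq frob_eq.
have key : (1 - iota b * x ^+ n) ^+ (q + m.-1) * (iota c * x ^+ q + iota a * x ^+ n.+1) ^+ m =
           (x ^+ q - iota b * x ^+ n.+1) ^+ m * (iota a * x ^+ n + iota c) ^+ (q + m.-1).
  by rewrite -curve_eq_ym -frob_eq -exprD !exprMn -!exprM mulnC; ring.
have := curve_frobenius_poly_neq b_neq0 abc_neq0 mn q_gt2.
rewrite -subr_eq0 => /(x_tr _); apply/negP; rewrite negbK.
rewrite !(rmorphB, rmorphD, rmorphM, rmorphXn, rmorph1) /= !map_polyC map_polyX !hornerE.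
by rewrite key subrr.
Qed.

Lemma curve_det_frob_matrix_neq0 q : c != 0 -> 4`!%:R != 0 :> K ->
  (1 < m <= n)%N -> (2 < q)%N -> \det (frob_matrix q D x y (fun i : 'I_5 => i : nat)) != 0.
Proof.
move=> c_neq0 fact4_neq0 mn q_gt2.
apply: (det_frob_matrix_conics_neq0 HD _ (curve_ratio_neq0 c_neq0) curve_D1y_neq0
          (curve_frobenius_off_conic mn q_gt2)).
move=> k lt_k4; apply: (hasse_deriv_geometric HD curve_D1E curve_D1g curve_D1y curve_E_neq0).
exact: natr_fact_neq0 fact4_neq0.
Qed.

End Derivatives.
End Curve.

Theorem proposition4p11 (p h : nat) (F : finFieldType) (a b c : F) (m n : nat) :
  prime p -> (5 < p)%N -> (0 < h)%N -> #|F| = (p ^ h)%N ->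
  a != 0 -> b != 0 -> c != 0 -> c != - (a / b) ->
  (0 < m)%N -> (0 < n)%N -> ~~ (p %| m * n)%N -> (m <= n)%N -> (2 < minn m n)%N ->
  (p %| n.+1)%N -> (p %| m.-1)%N ->
  forall (K : fieldType) (iota : {rmorphism F -> K}) (x y : K),
    transcendental iota x ->
    iota a * x ^+ n * y ^+ m + iota b * x ^+ n + iota c * y ^+ m = 1 ->
    forall D : nat -> K -> K, hasse_deriv iota x D ->
      frob_classical_conics (p ^ h)%N D x y.
Proof.
move=> p_pr p_gt5 h_gt0 card_F _ b_neq0 c_neq0 c_neq m_gt0 n_gt0 _ le_mn min_gt2 p_n1 p_m1
  K iota x y x_tr on_curve D HD.
have pK : p \in [pchar K] := rmorph_pchar iota (card_finPcharP card_F p_pr).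
have char_n1 : n.+1%:R = 0 :> K by apply/eqP; rewrite -(dvdn_pcharf pK).
have char_m1 : m.-1%:R = 0 :> K by apply/eqP; rewrite -(dvdn_pcharf pK).
have abc_neq0 : a + b * c != 0.
  by apply: contra_neq c_neq => abc_eq0; apply: (eq_lincomb1 b^-1 abc_eq0); field.
have mn : (1 < m <= n)%N by rewrite le_mn andbT; move: min_gt2; rewrite leq_min => /andP[/ltnW].
have q_gt2 : (2 < p ^ h)%N.
  have : (p ^ 1 <= p ^ h)%N by rewrite leq_exp2l ?prime_gt1.
  by rewrite expn1; lia.
apply: frob_classical_conics_det.
apply: (curve_det_frob_matrix_neq0 m_gt0 on_curve x_tr b_neq0 n_gt0 HD char_n1 char_m1 abc_neq0)
  => //.
by rewrite -(dvdn_pcharf pK) prime_ndvd_fact // ltnW.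
Qed.
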